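(* Fix integers $L\ge1$, $n_0,\dots,n_L\ge1$, let $\boldsymbol{\mathcal W}=\mathbb{R}^{n_0\times n_1}\times\cdots\times\mathbb{R}^{n_{L-1}\times n_L}$, and for $\mathbf W=(W_1,\dots,W_L)\in\boldsymbol{\mathcal W}$ let $F(\mathbf W,\cdot)=\Lambda_L(W_L,\cdot)\circ\cdots\circ\Lambda_1(W_1,\cdot)\colon\mathbb{R}^{n_0}\to\mathbb{R}^{n_L}$ with $\Lambda_l(W_l,x)=\sigma_l(W_l^\top x+b_l)$, fixed biases $b_l$, each $\sigma_l$ ($l<L$) applying a smooth, monotonically increasing, Lipschitz scalar function entrywise, and $\sigma_L=\mathrm{id}$. Let $\boldsymbol{\mathcal X}\subset\mathbb{R}^{n_0}$ be a compact smooth submanifold (the input space). Then for every rank-deficient $\mathbf W_1\in\boldsymbol{\mathcal W}$ and every $\epsilon>0$ there exists a full-rank $\mathbf W_2\in\boldsymbol{\mathcal W}$ such that $\|F(\mathbf W_2,x)-F(\mathbf W_1,x)\|_\infty\le\epsilon$ for all $x\in\boldsymbol{\mathcal X}$.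
   Context: $\mathbf W=(W_1,\dots,W_L)$ is called full-rank if every matrix $W_l$ has full rank $\min(n_{l-1},n_l)$, and rank-deficient otherwise. $\|\cdot\|_\infty$ is the max-norm on $\mathbb{R}^{n_L}$. The paper assumes throughout that the input space is a compact smooth manifold. *)

From HB Require Import structures.
From mathcomp Require Import all_boot all_order all_algebra.
From mathcomp Require Import all_classical all_reals all_analysis.
Set Implicit Arguments. Unset Strict Implicit. Unset Printing Implicit Defensive.
Import Order.TTheory GRing.Theory Num.Theory.
Import numFieldNormedType.Exports.
Local Open Scope ring_scope.

(* Layers are indexed 0..L-1 (paper: 1..L). Layer l has weight matrix
   W l : 'M_(n l, n l.+1) and bias b l : 'rV_(n l.+1). Inputs are row
   vectors, so x *m W l is the transpose of W_l^T x. *)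

Fixpoint fwd (R : pzRingType) (n : nat -> nat)
  (W : forall l, 'M[R]_(n l, n l.+1)) (b : forall l, 'rV[R]_(n l.+1))
  (sigma : nat -> R -> R) (k : nat) (x : 'rV[R]_(n 0%N)) : 'rV[R]_(n k) :=
  match k return 'rV[R]_(n k) with
  | 0%N => x
  | k'.+1 => map_mx (sigma k') (fwd W b sigma k' x *m W k' + b k')
  end.

Definition net (R : pzRingType) (n : nat -> nat) (L : nat)
  (W : forall l, 'M[R]_(n l, n l.+1)) (b : forall l, 'rV[R]_(n l.+1))
  (sigma : nat -> R -> R) (x : 'rV[R]_(n 0%N)) : 'rV[R]_(n L) :=
  fwd W b sigma L x.

Definition full_rank (R : fieldType) (n : nat -> nat) (L : nat)
  (W : forall l, 'M[R]_(n l, n l.+1)) : Prop :=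
  forall l, (l < L)%N -> \rank (W l) = minn (n l) (n l.+1).

Definition maxnorm (R : realDomainType) (m : nat) (v : 'rV[R]_m) : R :=
  \big[Num.max/0]_(j < m) `|v ord0 j|.

Definition smooth_fun (R : realType) (f : R -> R) : Prop :=
  forall (k : nat) (x : R), derivable (iter k (@derive1 R R) f) x 1.

Definition nondecr_act (R : realDomainType) (f : R -> R) : Prop :=
  forall x y : R, x <= y -> f x <= f y.

Definition lipschitz_act (R : realDomainType) (f : R -> R) : Prop :=
  exists k : R, forall x y : R, `|f x - f y| <= k * `|x - y|.

(* Perturb each weight matrix W_l by s_l times the partial identity. Its
   leading min(n_l, n_{l+1}) square block becomes A_l + s_l I, which is
   invertible unless s_l is a root of the characteristic polynomial of -A_l,
   so the perturbed matrix has full rank for all but finitely many s_l, and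
   s_l can be taken as small as we like. Since every layer is Lipschitz and X
   is bounded, the network output on X moves by at most C max_l |s_l| for a
   constant C depending only on W_1 and X. *)

From HB Require Import structures.
From mathcomp Require Import all_boot all_order all_algebra.
From mathcomp Require Import all_classical all_reals all_analysis.
From mathcomp Require Import zify.
Set Implicit Arguments. Unset Strict Implicit. Unset Printing Implicit Defensive.
Import Order.TTheory GRing.Theory Num.Theory.
Import numFieldNormedType.Exports.
Local Open Scope ring_scope.

Definition lipschitz_with (R : numDomainType) (K : R) (f : R -> R) : Prop :=
  forall x y, `|f x - f y| <= K * `|x - y|.

Section MatrixNorm.
Variable R : realFieldType.

Lemma ler_mxentry_norm m n (A : 'M[R]_(m, n)) i j : `|A i j| <= `|A|.
Proof. by rewrite [leRHS]/Num.Def.normr /= mx_normrE; exact: (le_bigmax _ _ (i, j)). Qed.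

Lemma mx_norm_le m n (A : 'M[R]_(m, n)) c :
  0 <= c -> (forall i j, `|A i j| <= c) -> `|A| <= c.
Proof. by move=> c0 Ac; rewrite [leLHS]/Num.Def.normr /= mx_normrE bigmax_le // => -[i j]. Qed.

Lemma maxnormE m (v : 'rV[R]_m) : maxnorm v = `|v|.
Proof.
rewrite /maxnorm; apply/le_anti/andP; split.
  by apply: bigmax_le => // j _; exact: ler_mxentry_norm.
apply: mx_norm_le => [|i j]; first exact: bigmax_ge_id.
by rewrite ord1; exact: (le_bigmax _ (fun j => `|v ord0 j|)).
Qed.

Lemma ler_norm_mulmx m p n (A : 'M[R]_(m, p)) (B : 'M[R]_(p, n)) :
  `|A *m B| <= p%:R * (`|A| * `|B|).
Proof.
apply: mx_norm_le => [|i j]; first by rewrite !mulr_ge0.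
rewrite mxE -[p in p%:R]card_ord mulr_natl -sumr_const.
apply: le_trans (ler_norm_sum _ _ _) (ler_sum _ _) => k _; rewrite normrM.
by apply: ler_pM => //; exact: ler_mxentry_norm.
Qed.

Lemma norm_pid_mx_le1 m n r : `|pid_mx r : 'M[R]_(m, n)| <= 1.
Proof. by apply: mx_norm_le => // i j; rewrite mxE normr_nat lern1 leq_b1. Qed.

Lemma lipschitz_map_mx (f : R -> R) K m n (u v : 'M[R]_(m, n)) :
  0 <= K -> lipschitz_with K f ->
  `|map_mx f u - map_mx f v| <= K * `|u - v|.
Proof.
move=> K0 fK; apply: mx_norm_le => [|i j]; first by rewrite mulr_ge0.
rewrite !mxE; apply: le_trans (fK _ _) _; apply: ler_wpM2l => //.
by have := ler_mxentry_norm (u - v) i j; rewrite !mxE.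
Qed.

End MatrixNorm.

(* [\rank] reads its argument in %MS scope, where [+] is the sum of row spaces. *)
Lemma mxrank_add_scalar (F : fieldType) n (A : 'M[F]_n) s :
  ~~ root (char_poly (- A)) s -> \rank (A + s%:M)%R = n.
Proof.
rewrite -eigenvalue_root_char /eigenvalue /eigenspace negbK kermx_eq0.
by rewrite /row_free -opprD mxrank_opp => /eqP.
Qed.

Definition leading_block (F : pzRingType) m n (W : 'M[F]_(m, n)) : 'M[F]_(minn m n) :=
  pid_mx (minn m n) *m W *m pid_mx (minn m n).

Lemma rank_add_scaled_pid (F : fieldType) m n (W : 'M[F]_(m, n)) s :
  ~~ root (char_poly (- leading_block W)) s ->
  \rank (W + s *: pid_mx (minn m n))%R = minn m n.
Proof.
move=> /mxrank_add_scalar rank_block.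
apply/eqP; rewrite eqn_leq leq_min rank_leq_row rank_leq_col /= -{1}rank_block.
suff -> : leading_block W + s%:M =
    pid_mx (minn m n) *m (W + s *: pid_mx (minn m n)) *m pid_mx (minn m n).
  exact: leq_trans (mxrankM_maxl _ _) (mxrankM_maxr _ _).
rewrite mulmxDr mulmxDl -scalemxAr -scalemxAl !mul_pid_mx.
rewrite (_ : minn n _ = minn m n); last by lia.
by rewrite pid_mx_1 scalemx1.
Qed.

Lemma exists_nonroot_itv (R : realFieldType) (p : {poly R}) c :
  p != 0 -> 0 < c -> exists2 s, 0 < s <= c & ~~ root p s.
Proof.
move=> p0 c0; pose cands := [seq c / k.+1%:R | k <- iota 0 (size p)].
have cands_uniq : uniq cands.
  rewrite map_inj_uniq ?iota_uniq // => i j /(mulfI (lt0r_neq0 c0)) /invr_inj.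
  by move/eqP; rewrite eqr_nat => /eqP [].
have : ~~ all (root p) cands.
  apply/negP => all_roots; have := max_poly_roots p0 all_roots cands_uniq.
  by rewrite size_map size_iota ltnn.
rewrite -has_predC => /hasP [_ /mapP [k _ ->] nonroot]; exists (c / k.+1%:R) => //.
by rewrite divr_gt0 ?ltr0Sn //= ler_pdivrMr ?ltr0Sn // ler_pMr // ler1n.
Qed.

Lemma exists_small_full_rank_shift (R : realFieldType) m n (W : 'M[R]_(m, n)) c :
  0 < c -> exists s, 0 < s <= c /\ \rank (W + s *: pid_mx (minn m n))%R = minn m n.
Proof.
move=> c0; have char_neq0 := monic_neq0 (char_poly_monic (- leading_block W)).
have [s sc nonroot] := exists_nonroot_itv char_neq0 c0.
by exists s; split => //; exact: rank_add_scaled_pid.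
Qed.

Lemma lipschitz_act_ge0 (R : realDomainType) (f : R -> R) :
  lipschitz_act f -> exists2 K, 0 <= K & lipschitz_with K f.
Proof.
move=> [K fK]; exists `|K| => // x y.
by apply: le_trans (fK x y) (ler_wpM2r _ (ler_norm K)).
Qed.

Lemma layer_dist (R : realFieldType) m p (f : R -> R) K (u v : 'rV[R]_m)
    (W V : 'M[R]_(m, p)) (c : 'rV[R]_p) :
  0 <= K -> lipschitz_with K f ->
  `|map_mx f (u *m W + c) - map_mx f (v *m V + c)|
    <= K * (m%:R * (`|u - v| * `|W| + `|v| * `|W - V|)).
Proof.
move=> K0 fK; apply: le_trans (lipschitz_map_mx _ _ K0 fK) (ler_wpM2l K0 _).
have -> : u *m W + c - (v *m V + c) = (u - v) *m W + v *m (W - V).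
  by rewrite mulmxBl mulmxBr addrA subrK opprD addrACA subrr addr0.
rewrite mulrDr; apply: le_trans (ler_normD _ _) (lerD _ _); exact: ler_norm_mulmx.
Qed.

Section Perturbation.
Variables (R : realFieldType) (n : nat -> nat) (L : nat).
Variables (b : forall l, 'rV[R]_(n l.+1)) (sigma : nat -> R -> R).
Variable X : set 'rV[R]_(n 0%N).
Hypothesis sigma_lipschitz : forall l, (l < L)%N ->
  exists2 K, 0 <= K & lipschitz_with K (sigma l).
Hypothesis X_bounded : exists B, forall x, X x -> `|x| <= B.

Lemma fwd_bounded (W : forall l, 'M[R]_(n l, n l.+1)) k : (k <= L)%N ->
  exists B, forall x, X x -> `|fwd W b sigma k x| <= B.
Proof.
elim: k => [_|k IH kL]; first exact: X_bounded.
have [B fwdB] := IH (ltnW kL); have [K K0 sK] := sigma_lipschitz kL.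
exists (K * ((n k)%:R * (B * `|W k|)) + `|map_mx (sigma k) (b k)|) => x Xx /=.
have := layer_dist (fwd W b sigma k x) 0 (W k) (W k) (b k) K0 sK.
rewrite mul0mx add0r subr0 normr0 mul0r addr0 => dist_to_bias.
rewrite -[X in `|X|](subrK (map_mx (sigma k) (b k))).
apply: le_trans (ler_normD _ _) (lerD _ (lexx _)); apply: le_trans dist_to_bias _.
by apply/ler_wpM2l/ler_wpM2l => //; exact/ler_wpM2r/fwdB.
Qed.

Variable W1 : forall l, 'M[R]_(n l, n l.+1).

Lemma fwd_weight_lipschitz k : (k <= L)%N -> exists2 C, 0 <= C &
  forall t (W2 : forall l, 'M[R]_(n l, n l.+1)),
    t <= 1 -> (forall l, `|W2 l - W1 l| <= t) ->
    forall x, X x -> `|fwd W2 b sigma k x - fwd W1 b sigma k x| <= C * t.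
Proof.
elim: k => [_|k IH kL].
  by exists 0 => // t W2 _ _ x _; rewrite subrr normr0 mul0r.
have [C C0 fwdC] := IH (ltnW kL); have [B fwdB] := fwd_bounded W1 (ltnW kL).
have [K K0 sK] := sigma_lipschitz kL.
exists (K * ((n k)%:R * (C * (`|W1 k| + 1) + `|B|))) => [|t W2 t1 W21 x Xx /=].
  by rewrite !mulr_ge0 ?addr_ge0 ?mulr_ge0 ?addr_ge0.
apply: le_trans (layer_dist _ _ _ _ _ K0 sK) _.
rewrite -!mulrA; apply/ler_wpM2l/ler_wpM2l => //; rewrite mulrDl.
have W2_le : `|W2 k| <= `|W1 k| + 1.
  rewrite -[W2 k](subrK (W1 k)) addrC; apply: le_trans (ler_normD _ _) _.
  by rewrite lerD2l (le_trans (W21 k)).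
apply: lerD; last by apply: ler_pM => //; exact: le_trans (fwdB x Xx) (ler_norm B).
by rewrite mulrAC; apply: ler_pM => //; exact: fwdC.
Qed.

End Perturbation.

Theorem proposition1 (R : realType) (L : nat) (n : nat -> nat)
  (b : forall l, 'rV[R]_(n l.+1)) (sigma : nat -> R -> R)
  (X : set 'rV[R]_(n 0%N)) :
  (1 <= L)%N ->
  (forall l, (l <= L)%N -> (1 <= n l)%N) ->
  (forall l, (l < L.-1)%N ->
     smooth_fun (sigma l) /\ nondecr_act (sigma l) /\ lipschitz_act (sigma l)) ->
  sigma L.-1 = id ->
  compact X ->
  forall (W1 : forall l, 'M[R]_(n l, n l.+1)),
    ~ full_rank L W1 ->
    forall eps : R, 0 < eps ->
      exists W2 : forall l, 'M[R]_(n l, n l.+1),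
        full_rank L W2 /\
        forall x, X x ->
          maxnorm (net L W2 b sigma x - net L W1 b sigma x) <= eps.
Proof.
move=> _ _ act_hyps last_id cX W1 _ eps eps0.
have sigma_lipschitz l : (l < L)%N ->
    exists2 K, 0 <= K & lipschitz_with K (sigma l).
  case: (ltnP l L.-1) => [/act_hyps [_ [_ /lipschitz_act_ge0 //]] | lL1 lL].
  have -> : l = L.-1 by lia.
  by rewrite last_id; exists 1 => // x y; rewrite mul1r.
have X_bounded : exists B, forall x, X x -> `|x| <= B.
  have [M [Mreal XM]] := compact_bounded cX; exists (`|M| + 1); apply: XM.
  by rewrite (le_lt_trans (real_ler_norm Mreal)) ?ltrDl.
have [C C0 perturb] := fwd_weight_lipschitz b sigma_lipschitz X_bounded W1 (leqnn L).
pose t := Num.min 1 (eps / (C + 1)).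
have t0 : 0 < t by rewrite lt_min ltr01 divr_gt0 // ltr_wpDl.
have /choice [s shift] := fun l => exists_small_full_rank_shift (W1 l) t0.
exists (fun l => W1 l + s l *: pid_mx (minn (n l) (n l.+1))).
split => [l _ | x Xx]; first exact: (shift l).2.
rewrite /net maxnormE; apply: le_trans (perturb t _ _ _ x Xx) _.
- by rewrite ge_min lexx.
- move=> l; have /andP [sl0 slt] := (shift l).1.
  rewrite addrC addKr normrZ gtr0_norm //.
  apply: le_trans slt; apply: ler_piMr (ltW sl0) _; exact: norm_pid_mx_le1.
- have : t <= eps / (C + 1) by rewrite ge_min lexx orbT.
  rewrite ler_pdivlMr ?ltr_wpDl // => tC.
  by apply: le_trans tC; rewrite mulrC ler_pM2l // lerDl.
Qed.
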